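(* Let $R$ be a relational type, possibly containing the type variable $X$ free, with $X\in^+ R$, and let $\gamma$ be an environment defined on the free type variables of $\mathrm{Rec}\,X.R$. Then for all terms $t_1,t_2$: $t_1\,\llbracket \mathrm{Rec}\,X.R \simeq [\mathrm{Rec}\,X.R/X]R\rrbracket_\gamma\,t_2$.
   Context: Terms are those of the pure untyped $\lambda$-calculus, up to $\alpha$-equivalence; $=_{\beta\eta}$ is $\beta\eta$-convertibility. Relational types: $R ::= X \mid R\to R' \mid \forall X.R \mid R^{\cup} \mid R\cdot R' \mid t$ (last form: promotion of a term); $[R/X]R'$ is capture-avoiding substitution. A relation $r$ on terms is $\beta\eta$-closed if $t_1\,r\,t_2$, $t_1'=_{\beta\eta}t_1$, $t_2'=_{\beta\eta}t_2$ imply $t_1'\,r\,t_2'$; $\mathcal{R}$ is the set of such relations; environments $\gamma$ map finitely many type variables to $\mathcal{R}$. Interpretation: $\llbracket X\rrbracket_\gamma=\gamma(X)$; $t\,\llbracket R\to R'\rrbracket_\gamma\,t'$ iff for all $a,a'$ with $a\,\llbracket R\rrbracket_\gamma\,a'$, $t\,a\,\llbracket R'\rrbracket_\gamma\,t'\,a'$; $\llbracket \forall X.R\rrbracket_\gamma=\bigcap_{r\in\mathcal{R}}\llbracket R\rrbracket_{\gamma[X\mapsto r]}$; $t\,\llbracket R^\cup\rrbracket_\gamma\,t'$ iff $t'\,\llbracket R\rrbracket_\gamma\,t$; $t\,\llbracket R\cdot R'\rrbracket_\gamma\,t'$ iff $\exists t''$ with $t\,\llbracket R\rrbracket_\gamma\,t''$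 and $t''\,\llbracket R'\rrbracket_\gamma\,t'$; $\llbracket \hat t\rrbracket_\gamma=\{(t,t')\mid \hat t\,t=_{\beta\eta}t'\}$. Abbreviations: $I:=\lambda x.x$, $K:=\lambda x.\lambda y.x$; $t\bullet R:=t\cdot R\cdot t^\cup$; $R\subseteq R':=(K\,I)\bullet(R\to R')$; $R\Rightarrow R':=K\bullet(R\to R')$; $R\simeq R':=(R\subseteq R')\cdot(R'\subseteq R)$; $\mathrm{Rec}\,X.R := \forall X.(R\subseteq X)\Rightarrow X$. With polarities $p\in\{+,-\}$ and $\bar p$ the other, $X\in^pR$ is defined by: $X\in^+X$; $X\in^pY$ for type variables $Y\ne X$; $X\in^p(R\to R')$ iff $X\in^{\bar p}R$ and $X\in^pR'$; $X\in^p\forall Y.R$ iff $X\in^pR$; $X\in^p(R\cdot R')$ iff $X\in^pR$ and $X\in^pR'$; $X\in^pR^\cup$ iff $X\in^pR$; $X\in^p t$ for every promoted term. *)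

From Stdlib Require Import Arith Bool.

(** * Pure untyped lambda-terms (de Bruijn indices: alpha-equivalence is syntactic equality) *)
Inductive term : Type :=
| var : nat -> term
| app : term -> term -> term
| lam : term -> term.

Fixpoint lift (k : nat) (t : term) : term :=
  match t with
  | var n => if n <? k then var n else var (S n)
  | app t1 t2 => app (lift k t1) (lift k t2)
  | lam t1 => lam (lift (S k) t1)
  end.

Fixpoint subst (k : nat) (u : term) (t : term) : term :=
  match t with
  | var n => if n =? k then u else if k <? n then var (pred n) else var n
  | app t1 t2 => app (subst k u t1) (subst k u t2)
  | lam t1 => lam (subst (S k) (lift 0 u) t1)
  end.

Inductive step : term -> term -> Prop :=
| step_beta : forall t u, step (app (lam t) u) (subst 0 u t)
| step_eta : forall t, step (lam (app (lift 0 t) (var 0))) t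
| step_appl : forall t t' u, step t t' -> step (app t u) (app t' u)
| step_appr : forall t u u', step u u' -> step (app t u) (app t u')
| step_lam : forall t t', step t t' -> step (lam t) (lam t').

Inductive conv : term -> term -> Prop :=
| conv_step : forall t u, step t u -> conv t u
| conv_refl : forall t, conv t t
| conv_sym : forall t u, conv t u -> conv u t
| conv_trans : forall t u v, conv t u -> conv u v -> conv t v.

Notation "t =be u" := (conv t u) (at level 70).

Definition tI : term := lam (var 0).
Definition tK : term := lam (lam (var 1)).

Definition rel := term -> term -> Prop.

Definition bclosed (r : rel) : Prop :=
  forall t1 t2 t1' t2', r t1 t2 -> t1' =be t1 -> t2' =be t2 -> r t1' t2'.

(** * Relational types; type variables are de Bruijn indices, [All] binds index 0 *)
Inductive rtype : Type :=
| TVar : nat -> rtype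
| Arr : rtype -> rtype -> rtype
| All : rtype -> rtype
| Conv : rtype -> rtype
| Comp : rtype -> rtype -> rtype
| Prom : term -> rtype.

Fixpoint tlift (k : nat) (R : rtype) : rtype :=
  match R with
  | TVar n => if n <? k then TVar n else TVar (S n)
  | Arr R1 R2 => Arr (tlift k R1) (tlift k R2)
  | All R1 => All (tlift (S k) R1)
  | Conv R1 => Conv (tlift k R1)
  | Comp R1 R2 => Comp (tlift k R1) (tlift k R2)
  | Prom t => Prom t
  end.

Fixpoint tsubst (k : nat) (S : rtype) (R : rtype) : rtype :=
  match R with
  | TVar n => if n =? k then S else if k <? n then TVar (pred n) else TVar n
  | Arr R1 R2 => Arr (tsubst k S R1) (tsubst k S R2)
  | All R1 => All (tsubst (Datatypes.S k) (tlift 0 S) R1)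
  | Conv R1 => Conv (tsubst k S R1)
  | Comp R1 R2 => Comp (tsubst k S R1) (tsubst k S R2)
  | Prom t => Prom t
  end.

Definition env := nat -> rel.
Definition env_cons (r : rel) (g : env) : env :=
  fun n => match n with 0 => r | Datatypes.S m => g m end.

Fixpoint interp (g : env) (R : rtype) : rel :=
  match R with
  | TVar n => g n
  | Arr R1 R2 => fun t t' => forall a a', interp g R1 a a' -> interp g R2 (app t a) (app t' a')
  | All R1 => fun t t' => forall r : rel, bclosed r -> interp (env_cons r g) R1 t t'
  | Conv R1 => fun t t' => interp g R1 t' t
  | Comp R1 R2 => fun t t' => exists t'', interp g R1 t t'' /\ interp g R2 t'' t'
  | Prom u => fun t t' => app u t =be t'
  end.

Definition Dot (t : term) (R : rtype) : rtype := Comp (Comp (Prom t) R) (Conv (Prom t)).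
Definition Subset (R R' : rtype) : rtype := Dot (app tK tI) (Arr R R').
Definition Imp (R R' : rtype) : rtype := Dot tK (Arr R R').
Definition Equiv (R R' : rtype) : rtype := Comp (Subset R R') (Subset R' R).
(** Rec X.R, where X is index 0 of the body R *)
Definition Rec (R : rtype) : rtype := All (Imp (Subset R (TVar 0)) (TVar 0)).

(** * Polarity: [occ k p R] is "X in^p R" for X the variable with index k
      (p = true is +, p = false is -) *)
Fixpoint occ (k : nat) (p : bool) (R : rtype) : Prop :=
  match R with
  | TVar n => if n =? k then p = true else True
  | Arr R1 R2 => occ k (negb p) R1 /\ occ k p R2
  | All R1 => occ (Datatypes.S k) p R1
  | Conv R1 => occ k p R1
  | Comp R1 R2 => occ k p R1 /\ occ k p R2
  | Prom _ => True
  end.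

From Stdlib Require Import Arith Lia Relations.

(* Sandwiching with a promoted term turns [t • (A -> B)] into a statement about
   [A -> B] at [t a] and [t a'].  With [t = K I], which discards [a], it says
   [A ⊆ B]; with [t = K], it says "if [A] is inhabited then [B t t']".  Hence
   [Rec X.R] denotes the intersection of all βη-closed relations [r] with
   [F r ⊆ r], where [F r = ⟦R⟧_{γ[X ↦ r]}] is monotone because [X] occurs
   positively in [R].  By Knaster–Tarski this intersection is a fixed point of
   [F], and the substitution lemma identifies [⟦[Rec X.R/X]R⟧] with
   [F ⟦Rec X.R⟧].  Finally [A ≃ B] relates any two terms once [A] and [B]
   denote the same relation. *)

Lemma conv_app_l t t' u : t =be t' -> app t u =be app t' u.
Proof.
  induction 1.
  - apply conv_step, step_appl; assumption.
  - apply conv_refl.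
  - apply conv_sym; assumption.
  - eapply conv_trans; eassumption.
Qed.

Lemma conv_app_r t u u' : u =be u' -> app t u =be app t u'.
Proof.
  induction 1.
  - apply conv_step, step_appr; assumption.
  - apply conv_refl.
  - apply conv_sym; assumption.
  - eapply conv_trans; eassumption.
Qed.

Lemma subst_lift t k u : subst k u (lift k t) = t.
Proof.
  revert k u; induction t as [n | t1 IH1 t2 IH2 | t IH]; intros k u; simpl.
  - destruct (Nat.ltb_spec n k); cbn [subst].
    + destruct (Nat.eqb_spec n k); [lia |].
      destruct (Nat.ltb_spec k n); [lia | reflexivity].
    + destruct (Nat.eqb_spec (S n) k); [lia |].
      destruct (Nat.ltb_spec k (S n)); [reflexivity | lia].
  - rewrite IH1, IH2; reflexivity.
  - rewrite IH; reflexivity.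
Qed.

Lemma conv_tK t u : app (app tK t) u =be t.
Proof.
  eapply conv_trans.
  - apply conv_app_l, conv_step, step_beta.
  - simpl. eapply conv_trans; [apply conv_step, step_beta |].
    rewrite subst_lift; apply conv_refl.
Qed.

Lemma conv_tK_tI t u : app (app (app tK tI) t) u =be u.
Proof.
  eapply conv_trans.
  - apply conv_app_l, conv_tK.
  - apply conv_step, step_beta.
Qed.

Lemma interp_Arr_bclosed g A B :
  bclosed (interp g B) -> bclosed (interp g (Arr A B)).
Proof.
  intros HB t1 t2 t1' t2' H H1 H2 a a' Ha.
  eapply HB; [apply H, Ha | apply conv_app_l; exact H1 | apply conv_app_l; exact H2].
Qed.

Lemma interp_bclosed R g : (forall n, bclosed (g n)) -> bclosed (interp g R).
Proof.
  revert g; induction R as [n | R1 IH1 R2 IH2 | R IH | R IH | R1 IH1 R2 IH2 | u];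
    intros g Hg.
  - apply Hg.
  - apply interp_Arr_bclosed, IH2, Hg.
  - intros t1 t2 t1' t2' H H1 H2 r Hr.
    eapply IH; [| apply H, Hr | exact H1 | exact H2].
    intros [| n]; [exact Hr | apply Hg].
  - intros t1 t2 t1' t2' H H1 H2; eapply IH; eassumption.
  - intros t1 t2 t1' t2' [t [Ht1 Ht2]] H1 H2; exists t; split.
    + eapply (IH1 g Hg); [exact Ht1 | exact H1 | apply conv_refl].
    + eapply (IH2 g Hg); [exact Ht2 | apply conv_refl | exact H2].
  - intros t1 t2 t1' t2' H H1 H2; simpl in *.
    eapply conv_trans; [apply conv_app_r, H1 |].
    eapply conv_trans; [exact H | apply conv_sym, H2].
Qed.

Definition env_equiv (g g' : env) : Prop := forall n t t', g n t t' <-> g' n t t'.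

Lemma env_equiv_cons r g g' : env_equiv g g' -> env_equiv (env_cons r g) (env_cons r g').
Proof. intros E [| n] t t'; simpl; [reflexivity | apply E]. Qed.

Lemma interp_ext R g g' : env_equiv g g' -> forall t t', interp g R t t' <-> interp g' R t t'.
Proof.
  revert g g'; induction R as [n | R1 IH1 R2 IH2 | R IH | R IH | R1 IH1 R2 IH2 | u];
    intros g g' E t t'; simpl.
  - apply E.
  - split; intros H a a' Ha; apply (IH2 g g' E), H, (IH1 g g' E), Ha.
  - split; intros H r Hr; apply (IH _ _ (env_equiv_cons r _ _ E)), H, Hr.
  - apply IH, E.
  - split; intros [u [H1 H2]]; exists u; split;
      first [apply (IH1 _ _ E) | apply (IH2 _ _ E)]; assumption.
  - reflexivity.
Qed.

(* [env_insert k r g] is [g] with [r] inserted at index [k] and the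
   variables [>= k] shifted up, the semantic counterpart of [tlift k]. *)
Fixpoint env_insert (k : nat) (r : rel) (g : env) : env :=
  match k with
  | 0 => env_cons r g
  | S k' => env_cons (g 0) (env_insert k' r (fun n => g (S n)))
  end.

Lemma env_insert_lt k r g n : n < k -> env_insert k r g n = g n.
Proof.
  revert g n; induction k as [| k IH]; intros g [| n] Hn; simpl; try lia; try reflexivity.
  apply (IH (fun m => g (S m))); lia.
Qed.

Lemma env_insert_eq k r g : env_insert k r g k = r.
Proof. revert g; induction k as [| k IH]; intros g; simpl; auto. Qed.

Lemma env_insert_gt k r g n : k <= n -> env_insert k r g (S n) = g n.
Proof.
  revert g n; induction k as [| k IH]; intros g [| n] Hn; simpl; try lia; try reflexivity.
  apply (IH (fun m => g (S m))); lia.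
Qed.

Lemma env_insert_equiv k r r' g :
  (forall t t', r t t' <-> r' t t') -> env_equiv (env_insert k r g) (env_insert k r' g).
Proof.
  revert g; induction k as [| k IH]; intros g Hr [| n] t t'; simpl;
    try reflexivity; [apply Hr | apply IH, Hr].
Qed.

Lemma interp_tlift R k r g t t' :
  interp (env_insert k r g) (tlift k R) t t' <-> interp g R t t'.
Proof.
  revert k g t t'; induction R as [n | R1 IH1 R2 IH2 | R IH | R IH | R1 IH1 R2 IH2 | u];
    intros k g t t'; simpl.
  - destruct (Nat.ltb_spec n k); simpl.
    + rewrite env_insert_lt by assumption; reflexivity.
    + rewrite env_insert_gt by assumption; reflexivity.
  - split; intros H a a' Ha; apply (IH2 k g), H, (IH1 k g), Ha.
  - split; intros H r' Hr; apply (IH (S k) (env_cons r' g)), H, Hr.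
  - apply IH.
  - split; intros [u [H1 H2]]; exists u; split;
      first [apply (IH1 k g) | apply (IH2 k g)]; assumption.
  - reflexivity.
Qed.

Lemma interp_tsubst R k S g t t' :
  interp g (tsubst k S R) t t' <-> interp (env_insert k (interp g S) g) R t t'.
Proof.
  revert k S g t t'; induction R as [n | R1 IH1 R2 IH2 | R IH | R IH | R1 IH1 R2 IH2 | u];
    intros k S g t t'; simpl.
  - destruct (Nat.eqb_spec n k) as [-> |]; [rewrite env_insert_eq; reflexivity |].
    destruct (Nat.ltb_spec k n) as [Hkn | Hnk].
    + destruct n as [| n]; [lia |].
      simpl; rewrite env_insert_gt by lia; reflexivity.
    + simpl; rewrite env_insert_lt by lia; reflexivity.
  - split; intros H a a' Ha; apply (IH2 k S g), H, (IH1 k S g), Ha.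
  - assert (E : forall r, env_equiv
      (env_insert (Datatypes.S k) (interp (env_cons r g) (tlift 0 S)) (env_cons r g))
      (env_cons r (env_insert k (interp g S) g))).
    { intros r. apply env_equiv_cons, env_insert_equiv.
      intros a a'; apply (interp_tlift S 0 r g). }
    split; intros H r Hr; specialize (H r Hr).
    + apply (interp_ext _ _ _ (E r)), IH, H.
    + apply IH, (interp_ext _ _ _ (E r)), H.
  - apply IH.
  - split; intros [u [H1 H2]]; exists u; split;
      first [apply (IH1 k S g) | apply (IH2 k S g)]; assumption.
  - reflexivity.
Qed.

Lemma interp_monotone R k p g1 g2 :
  occ k p R ->
  (forall n, n <> k -> forall t t', g1 n t t' <-> g2 n t t') ->
  inclusion term (g1 k) (g2 k) ->
  if p then inclusion term (interp g1 R) (interp g2 R)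
  else inclusion term (interp g2 R) (interp g1 R).
Proof.
  revert k p g1 g2; induction R as [n | R1 IH1 R2 IH2 | R IH | R IH | R1 IH1 R2 IH2 | u];
    intros k p g1 g2 Hocc Hagree Hk; simpl in Hocc.
  - destruct (Nat.eqb_spec n k) as [-> | Hnk].
    + subst p; exact Hk.
    + destruct p; intros t t'; apply Hagree, Hnk.
  - destruct Hocc as [Hocc1 Hocc2].
    specialize (IH1 k (negb p) g1 g2 Hocc1 Hagree Hk).
    specialize (IH2 k p g1 g2 Hocc2 Hagree Hk).
    destruct p; simpl in *; intros t t' H a a' Ha; apply IH2, H, IH1, Ha.
  - assert (Hagree' : forall r n, n <> S k ->
                forall t t', env_cons r g1 n t t' <-> env_cons r g2 n t t').
    { intros r [| n] Hn t t'; simpl; [reflexivity | apply Hagree; lia]. }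
    destruct p; intros t t' H r Hr;
      apply (IH (S k) _ (env_cons r g1) (env_cons r g2) Hocc (Hagree' r) Hk), H, Hr.
  - specialize (IH k p g1 g2 Hocc Hagree Hk).
    destruct p; intros t t'; apply IH.
  - destruct Hocc as [Hocc1 Hocc2].
    specialize (IH1 k p g1 g2 Hocc1 Hagree Hk).
    specialize (IH2 k p g1 g2 Hocc2 Hagree Hk).
    destruct p; intros t t' [u [H1 H2]]; exists u; split;
      first [apply IH1 | apply IH2]; assumption.
  - destruct p; intros t t' H; exact H.
Qed.

Lemma interp_Dot g u R a a' :
  bclosed (interp g R) ->
  interp g (Dot u R) a a' <-> interp g R (app u a) (app u a').
Proof.
  intros HR; simpl; split.
  - intros [w [[v [Hv Hvw]] Hw]].
    eapply HR; [exact Hvw | exact Hv | exact Hw].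
  - intros H. exists (app u a'); split; [| apply conv_refl].
    exists (app u a); split; [apply conv_refl | exact H].
Qed.

Lemma interp_Subset g A B a a' :
  bclosed (interp g B) ->
  interp g (Subset A B) a a' <-> inclusion term (interp g A) (interp g B).
Proof.
  intros HB. unfold Subset. rewrite interp_Dot by (apply interp_Arr_bclosed, HB).
  simpl; split; intros H x y Hxy.
  - eapply HB; [apply H, Hxy | apply conv_sym, conv_tK_tI ..].
  - eapply HB; [apply H, Hxy | apply conv_tK_tI ..].
Qed.

Lemma interp_Imp g A B t t' :
  bclosed (interp g B) ->
  interp g (Imp A B) t t' <-> (forall a a', interp g A a a' -> interp g B t t').
Proof.
  intros HB. unfold Imp. rewrite interp_Dot by (apply interp_Arr_bclosed, HB).
  simpl; split; intros H x y Hxy.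
  - eapply HB; [apply H, Hxy | apply conv_sym, conv_tK ..].
  - eapply HB; [eapply H, Hxy | apply conv_tK ..].
Qed.

Lemma interp_Equiv g A B t t' :
  bclosed (interp g A) -> bclosed (interp g B) ->
  interp g (Equiv A B) t t' <-> same_relation term (interp g A) (interp g B).
Proof.
  intros HA HB; simpl; split.
  - intros [u [HAB HBA]]; split.
    + apply (interp_Subset g A B t u HB), HAB.
    + apply (interp_Subset g B A u t' HA), HBA.
  - intros [HAB HBA]; exists t; split.
    + apply interp_Subset; assumption.
    + apply interp_Subset; assumption.
Qed.

Definition lfp (F : rel -> rel) : rel :=
  fun t t' => forall r, bclosed r -> inclusion term (F r) r -> r t t'.

Section Lfp.

Variable F : rel -> rel.
Hypothesis F_monotone : forall r r', inclusion term r r' -> inclusion term (F r) (F r').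
Hypothesis F_bclosed : forall r, bclosed r -> bclosed (F r).

Lemma lfp_bclosed : bclosed (lfp F).
Proof.
  intros t1 t2 t1' t2' H H1 H2 r Hr HFr; eapply Hr; [apply H | exact H1 | exact H2]; assumption.
Qed.

Lemma lfp_least r : bclosed r -> inclusion term (F r) r -> inclusion term (lfp F) r.
Proof. intros Hr HFr t t' H; apply H; assumption. Qed.

Lemma lfp_fold : inclusion term (F (lfp F)) (lfp F).
Proof.
  intros t t' H r Hr HFr.
  apply HFr, (F_monotone (lfp F)), H.
  apply lfp_least; assumption.
Qed.

Lemma lfp_unfold : inclusion term (lfp F) (F (lfp F)).
Proof.
  apply lfp_least; [apply F_bclosed, lfp_bclosed |].
  apply F_monotone, lfp_fold.
Qed.

End Lfp.

Lemma interp_Rec g R t t' :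
  interp g (Rec R) t t' <-> lfp (fun r => interp (env_cons r g) R) t t'.
Proof.
  split; intros H r Hr; specialize (H r Hr).
  - intros HFr.
    apply (proj1 (interp_Imp (env_cons r g) (Subset R (TVar 0)) (TVar 0) t t' Hr) H t t).
    apply interp_Subset; assumption.
  - apply (interp_Imp (env_cons r g) (Subset R (TVar 0)) (TVar 0) t t' Hr).
    intros a a' Ha.
    apply H, (interp_Subset (env_cons r g) R (TVar 0) a a' Hr), Ha.
Qed.

Theorem mainTheorem3 (R : rtype) (g : env) :
  (forall n, bclosed (g n)) ->
  occ 0 true R ->
  forall t1 t2 : term, interp g (Equiv (Rec R) (tsubst 0 (Rec R) R)) t1 t2.
Proof.
  intros Hg Hpos t1 t2.
  set (F := fun r => interp (env_cons r g) R).
  assert (F_monotone : forall r r', inclusion term r r' -> inclusion term (F r) (F r')).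
  { intros r r' Hrr'. apply (interp_monotone R 0 true); [exact Hpos | | exact Hrr'].
    intros [| n] Hn t t'; [lia | reflexivity]. }
  assert (F_bclosed : forall r, bclosed r -> bclosed (F r)).
  { intros r Hr. apply interp_bclosed. intros [| n]; [exact Hr | apply Hg]. }
  assert (Rec_lfp : inclusion term (interp g (Rec R)) (lfp F))
    by (intros t t'; apply interp_Rec).
  assert (lfp_Rec : inclusion term (lfp F) (interp g (Rec R)))
    by (intros t t'; apply interp_Rec).
  assert (unfold_Rec : forall t t',
             interp g (tsubst 0 (Rec R) R) t t' <-> F (interp g (Rec R)) t t')
    by (intros t t'; apply interp_tsubst).
  apply interp_Equiv; try (apply interp_bclosed; exact Hg).
  split; intros t t' H; [apply unfold_Rec | apply unfold_Rec in H].
  - apply (F_monotone _ _ lfp_Rec), lfp_unfold, Rec_lfp, H; assumption.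
  - apply lfp_Rec, (lfp_fold F F_monotone), (F_monotone _ _ Rec_lfp), H.
Qed.
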